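(* Let $k$ be even, $d\ge1$, $\ell\ge1$, $n\ge1$, $p\in[0,1]$, and let $\Phi$ be a random $k$-XOR instance with probability $p$. Then $$\mathbb{E}\,\mathrm{tr}\big((R^{\Phi,d})^{2\ell}\big)\le\frac{1}{((kd/2)!)^{2\ell}}\sum_{\mathcal{Q}\text{ even}}\Big[\big(p\,(kd/2)^{k/2}\big)^{|\mathcal{Q}|}\sum_{\{I_j\}\ \mathcal{Q}\text{-valid}}\ \prod_{j=1}^{2\ell}\mathrm{hist}(I_j)!\Big],$$ where the outer sum is over all even partitions $\mathcal{Q}$ of $\mathcal{I}=\{(j,s):j\in[2\ell],s\in[d]\}$ and the inner sum over all $\mathcal{Q}$-valid collections $\{I_j\}_{j=1}^{2\ell}$ of tuples in $[n]^{kd/2}$.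
   Context: Random $k$-XOR with probability $p$: each of the $n^k$ tuples $S\in[n]^k$ is independently included with probability $p$; for each included $S=(s_1,\dots,s_k)$ a constraint $\prod_{i=1}^k x_{s_i}=\eta_S$ is added, with $\eta_S$ i.i.d. uniform in $\{\pm1\}$. The constraint tensor $T$ has $T_S=\eta_S$ if $S$ is included and $T_S=0$ otherwise. $M^\Phi$ is the $n^{k/2}\times n^{k/2}$ matrix with rows/columns indexed by $[n]^{k/2}$ and $M^\Phi_{U,V}=T_{(U,V)}$ ($(U,V)$ the concatenation). $S^\Phi=\frac12(M^\Phi+(M^\Phi)^\top)$. For $d\ge1$, $S^{\Phi,d}$ has rows/columns indexed by $[n]^{kd/2}$, each tuple written as a concatenation $(U_1,\dots,U_d)$ of blocks in $[n]^{k/2}$, and $S^{\Phi,d}_{(U_1,\dots,U_d),(V_1,\dots,V_d)}=\prod_{s=1}^dS^\Phi_{U_s,V_s}$. For $I=(i_1,\dots,i_q)$ and $\pi\in\mathbb{S}_q$ (permutations of $[q]$), $\pi(I)=(i_{\pi(1)},\dots,i_{\pi(q)})$. Then $R^{\Phi,d}_{I,J}=\frac{1}{((kd/2)!)^2}\sum_{\pi,\sigma\in\mathbb{S}_{kd/2}}S^{\Phi,d}_{\pi(I),\sigma(J)}$. $\mathrm{hist}(I)=(\alpha_1,\dots,\alpha_n)$ with $\alpha_i$ the number of occurrences of $i$ in $I$; $\mathrm{hist}(I)!=\prod_i\alpha_i!$. Given $I_1,\dots,I_{2\ell}\in[n]^{kd/2}$ (indices modulo $2\ell$) and $\pi_j,\sigma_j\in\mathbb{S}_{kd/2}$,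 let $A_{j,s}$ be the $s$-th block of $\pi_j(I_j)$ and $B_{j,s}$ the $s$-th block of $\sigma_j(I_{j+1})$. $\mathrm{Par}(\{I_j\},\{\pi_j\},\{\sigma_j\})$ is the partition of $\mathcal{I}$ into classes of the relation $(j,s)\sim(j',s')$ iff $(A_{j,s},B_{j,s})=(A_{j',s'},B_{j',s'})$ or $=(B_{j',s'},A_{j',s'})$; $|\mathcal{Q}|$ denotes the number of classes. A partition is even if all classes have even size. $\{I_j\}$ is $\mathcal{Q}$-valid if there exist $\{\sigma_j\}$ with $\mathrm{Par}(\{I_j\},\{\mathrm{id}\},\{\sigma_j\})=\mathcal{Q}$ ($\{\mathrm{id}\}$: all $\pi_j$ identity). *)

From HB Require Import structures.
From mathcomp Require Import all_boot all_order all_algebra all_fingroup.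

Import Order.TTheory GRing.Theory Num.Theory.
Local Open Scope ring_scope.

(* An outcome of the random k-XOR instance on [n] : for every tuple S in [n]^k,
   an inclusion bit (first component) and a sign bit eta_S (second component,
   true = +1, false = -1). *)
Definition outcome (n k : nat) : finType :=
  ({ffun k.-tuple 'I_n -> bool} * {ffun k.-tuple 'I_n -> bool})%type.

Definition prob_outcome (R : numFieldType) (n k : nat) (p : R) (w : outcome n k) : R :=
  \prod_(S : k.-tuple 'I_n) ((if w.1 S then p else 1 - p) * 2^-1).

Definition expect (R : numFieldType) (n k : nat) (p : R) (X : outcome n k -> R) : R :=
  \sum_(w : outcome n k) prob_outcome R n k p w * X w.

(* Constraint tensor T, applied to a sequence (0 if it is not of length k). *)
Definition tensorT (R : numFieldType) (n k : nat) (w : outcome n k) (S : seq 'I_n) : R :=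
  match (insub S : option (k.-tuple 'I_n)) with
  | Some t => if w.1 t then (if w.2 t then 1 else -1) else 0
  | None => 0
  end.

Definition Mphi (R : numFieldType) n k (w : outcome n k) (U V : seq 'I_n) : R :=
  tensorT R n k w (U ++ V).

Definition Sphi (R : numFieldType) n k (w : outcome n k) (U V : seq 'I_n) : R :=
  (Mphi R n k w U V + Mphi R n k w V U) / 2.

(* s-th block (0-based) of length h of a tuple *)
Definition block (n h : nat) (s : nat) (I : seq 'I_n) : seq 'I_n :=
  take h (drop (s * h) I).

Definition SphiD (R : numFieldType) n k (d : nat) (w : outcome n k) (I J : seq 'I_n) : R :=
  \prod_(s < d) Sphi R n k w (block n (k./2) s I) (block n (k./2) s J).

Definition permute (n m : nat) (pi : 'S_m) (I : m.-tuple 'I_n) : m.-tuple 'I_n :=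
  [tuple tnth I (pi j) | j < m].

Definition RphiD (R : numFieldType) n k d (w : outcome n k)
    (I J : (k./2 * d).-tuple 'I_n) : R :=
  (((k./2 * d)`!)%:R ^+ 2)^-1 *
  \sum_(pi : 'S_(k./2 * d)) \sum_(sg : 'S_(k./2 * d))
     SphiD R n k d w (permute n _ pi I) (permute n _ sg J).

Definition Rmat (R : numFieldType) n k d (w : outcome n k) :
    'M[R]_#|{: (k./2 * d).-tuple 'I_n}| :=
  \matrix_(i, j) RphiD R n k d w (enum_val i) (enum_val j).

Definition histfact (n : nat) (I : seq 'I_n) : nat :=
  \prod_(i : 'I_n) (count_mem i I)`!.

(* (A_{j,s}, B_{j,s}): s-th blocks of pi_j(I_j) and sigma_j(I_{j+1}),
   indices j taken modulo 2l (ordS is the cyclic successor on 'I_L). *)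
Definition pairAB (n k d L : nat)
    (Is : {ffun 'I_L -> (k./2 * d).-tuple 'I_n})
    (pis sgs : {ffun 'I_L -> 'S_(k./2 * d)}) (x : 'I_L * 'I_d)
    : seq 'I_n * seq 'I_n :=
  (block n (k./2) x.2 (permute n _ (pis x.1) (Is x.1)),
   block n (k./2) x.2 (permute n _ (sgs x.1) (Is (ordS x.1)))).

Definition ParRel (n k d L : nat) Is pis sgs : rel ('I_L * 'I_d) :=
  fun x y => (pairAB n k d L Is pis sgs x == pairAB n k d L Is pis sgs y) ||
             (pairAB n k d L Is pis sgs x ==
                ((pairAB n k d L Is pis sgs y).2, (pairAB n k d L Is pis sgs y).1)).

Definition Par (n k d L : nat) Is pis sgs : {set {set 'I_L * 'I_d}} :=
  equivalence_partition (ParRel n k d L Is pis sgs) [set: 'I_L * 'I_d].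

Definition idperms (L m : nat) : {ffun 'I_L -> 'S_m} := [ffun => 1%g].

Definition Qvalid (n k d L : nat) (Q : {set {set 'I_L * 'I_d}})
    (Is : {ffun 'I_L -> (k./2 * d).-tuple 'I_n}) : bool :=
  [exists sgs : {ffun 'I_L -> 'S_(k./2 * d)}, Par n k d L Is (idperms L _) sgs == Q].

Definition even_partition (L d : nat) (Q : {set {set 'I_L * 'I_d}}) : bool :=
  partition Q [set: 'I_L * 'I_d] && [forall B in Q, ~~ odd #|B|].

(* Expanding tr((R^{Phi,d})^L), L = 2l, along closed walks gives
   ((kd/2)!)^{-2L} times a sum over index tuples I_1..I_L and permutations
   pi_j, sigma_j of prod_{(j,s)} S^Phi_{A_js, B_js} ([trace_Rmat_pow]).
   Each S^Phi_{A,B} averages T_(A,B) and T_(B,A); a monomial in the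
   independent entries of T has expectation prod_t E[T_t^{e_t}], which is 0
   if some e_t is odd and at most p^{#t with e_t > 0} otherwise.  Hence the
   expected product is at most p^|Q| if Q = Par({I_j},{pi_j},{sigma_j}) is
   even and 0 otherwise ([expect_Sphi_product_le]).  Relabelling I_j by
   pi_j(I_j) makes all pi_j trivial at the cost of ((kd/2)!)^L
   ([sum_over_pis]).  Finally, for fixed {I_j} the sigmas yielding a given Q
   number at most ((kd/2)^{k/2})^|Q| prod_j hist(I_j)!: one block of
   positions per class of Q determines every sigma_j(I_{j+1})
   ([sigmas_determined]), and sigma |-> sigma(I) has fibres of size at most
   hist(I)! ([card_permute_fibre]). *)

From HB Require Import structures.
From mathcomp Require Import all_boot all_order all_algebra all_fingroup.
From mathcomp Require Import ring.
Set Implicit Arguments. Unset Strict Implicit. Unset Printing Implicit Defensive.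
Import Order.TTheory GRing.Theory Num.Theory.

Lemma count_mem_tnth n m (I : m.-tuple 'I_n) (i : 'I_n) :
  count_mem i I = #|[pred x : 'I_m | tnth I x == i]|.
Proof.
rewrite -{1}(map_tnth_enum I) count_map -sum1_card -sum1_count.
by rewrite big_enum_cond /= big_mkcond [RHS]big_mkcond.
Qed.

(* A permutation preserving a colouring c : 'I_m -> 'I_n restricts to an
   injection of each colour class into itself, and is determined by these
   restrictions; hence there are at most prod_i |c^-1(i)|! of them. *)
Section ColourPreservingPerms.
Variables (n m : nat) (c : 'I_m -> 'I_n).

Definition colour_class (i : 'I_n) : finType := {x : 'I_m | c x == i}.

Definition class_injection (i : 'I_n) : finType :=
  {f : {ffun colour_class i -> colour_class i} | injectiveb f}.

Definition colour_preserving : {set {perm 'I_m}} :=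
  [set tau : {perm 'I_m} | [forall y, c (tau y) == c y]].

Definition class_restriction (tau : {perm 'I_m}) (i : 'I_n) :
    {ffun colour_class i -> colour_class i} :=
  [ffun x => insubd x (tau (val x))].

Lemma class_restriction_val tau i x : tau \in colour_preserving ->
  val (class_restriction tau i x) = tau (val x).
Proof.
rewrite inE => /forallP tauP; rewrite ffunE insubdK //.
by rewrite -topredE /= (eqP (tauP _)); exact: (valP x).
Qed.

Lemma class_restriction_inj tau i : tau \in colour_preserving ->
  injectiveb (class_restriction tau i).
Proof.
move=> tauP; apply/injectiveP => x1 x2 /(congr1 val).
by rewrite !class_restriction_val // => /perm_inj/val_inj.
Qed.

Lemma id_class_injection i : injectiveb [ffun x : colour_class i => x].
Proof. by apply/injectiveP => x y; rewrite !ffunE. Qed.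

(* All class restrictions at once (only meaningful on colour_preserving). *)
Definition restrictions (tau : {perm 'I_m}) : {dffun forall i, class_injection i} :=
  [ffun i => insubd (Sub [ffun x => x] (id_class_injection i) : class_injection i)
                    (class_restriction tau i)].

Lemma restrictions_inj : {in colour_preserving &, injective restrictions}.
Proof.
move=> t1 t2 t1P t2P E; apply/permP => y.
have Ey : restrictions t1 (c y) = restrictions t2 (c y) by rewrite E.
move: Ey; rewrite !ffunE => /(congr1 val).
rewrite !insubdK -?topredE /= ?class_restriction_inj // => Er.
have := congr1 (fun f : {ffun _ -> _} => val (f (Sub y (eqxx (c y))))) Er.
by rewrite /= !class_restriction_val.
Qed.

Lemma card_colour_preserving :
  #|colour_preserving| <= \prod_(i : 'I_n) (#|[pred x | c x == i]|)`!.
Proof.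
rewrite -(card_in_imset restrictions_inj).
apply: (leq_trans (max_card _)).
rewrite card_dep_ffun foldrE big_map big_enum /=.
apply: leq_prod => i _.
rewrite card_sig -(card_sig (fun x => c x == i)) -ffactnn -card_inj_ffuns.
by apply: subset_leq_card; apply/subsetP => f; rewrite !inE.
Qed.

End ColourPreservingPerms.

(* The fibres of sg |-> sg(I) have at most hist(I)! elements: two permutations
   in the same fibre differ by a permutation preserving the colouring tnth I. *)
Lemma card_permute_fibre n m (I B : m.-tuple 'I_n) :
  #|[set sg : 'S_m | permute n m sg I == B]| <= histfact n I.
Proof.
set F := [set _ | _].
have [->|[sg0 sg0F]] := set_0Vmem F; first by rewrite cards0.
have fibreP sg : sg \in F -> forall j, tnth I (sg j) = tnth B j.
  by rewrite inE => /eqP <- j; rewrite tnth_mktuple.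
rewrite -(card_imset _ (mulgI sg0^-1)%g) /histfact.
under eq_bigr => i _ do rewrite count_mem_tnth.
apply: leq_trans (card_colour_preserving (tnth I)).
apply/subset_leq_card/subsetP => _ /imsetP[sg sgF ->].
rewrite inE; apply/forallP => y; rewrite permM.
by rewrite (fibreP _ sgF) -(fibreP _ sg0F) permKV.
Qed.

Section UnorderedPairPartition.
Variables (X : finType) (T : eqType) (f : X -> T * T).

Definition swap_pair (u : T * T) : T * T := (u.2, u.1).

Definition upair_rel : rel X := fun x y => (f x == f y) || (f x == swap_pair (f y)).

Definition upair_partition : {set {set X}} := equivalence_partition upair_rel [set: X].

Lemma upair_relP x y : reflect (f x = f y \/ f x = swap_pair (f y)) (upair_rel x y).
Proof. by apply: (iffP orP) => -[/eqP|/eqP]; auto. Qed.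

Lemma upair_rel_refl x : upair_rel x x.
Proof. by rewrite /upair_rel eqxx. Qed.

Lemma upair_rel_sym x y : upair_rel x y -> upair_rel y x.
Proof.
by case/upair_relP => E; apply/upair_relP; rewrite E; [left | right; case: (f y)].
Qed.

Lemma upair_rel_trans x y z : upair_rel x y -> upair_rel y z -> upair_rel x z.
Proof.
case/upair_relP => E1 /upair_relP[] E2; apply/upair_relP; rewrite E1 E2;
  by case: (f z) => a b /=; auto.
Qed.

Lemma upair_rel_equiv : {in [set: X] & &, equivalence_rel upair_rel}.
Proof.
move=> x y z _ _ _; split=> [|xy]; first exact: upair_rel_refl.
by apply/idP/idP; [exact: upair_rel_trans (upair_rel_sym xy) | exact: upair_rel_trans].
Qed.

Lemma upair_partitionP : partition upair_partition [set: X].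
Proof. exact: equivalence_partitionP upair_rel_equiv. Qed.

Lemma upair_class_mem x : [set y in [set: X] | upair_rel x y] \in upair_partition.
Proof. by apply: imset_f; rewrite inE. Qed.

Lemma upair_rel_in_class C x y :
  C \in upair_partition -> x \in C -> y \in C -> upair_rel x y.
Proof.
move=> /imsetP [z _ ->]; rewrite !inE /= => zx zy.
exact: upair_rel_trans (upair_rel_sym zx) zy.
Qed.

Lemma upair_class_eq C1 C2 x1 x2 : C1 \in upair_partition -> C2 \in upair_partition ->
  x1 \in C1 -> x2 \in C2 -> upair_rel x1 x2 -> C1 = C2.
Proof.
move=> /imsetP [z1 _ ->] /imsetP [z2 _ ->]; rewrite !inE /= => r1 r2 r12.
have r : upair_rel z1 z2 := upair_rel_trans (upair_rel_trans r1 r12) (upair_rel_sym r2).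
apply/setP => z; rewrite !inE /=; apply/idP/idP => [z1z | z2z].
  exact: upair_rel_trans (upair_rel_sym r) z1z.
exact: upair_rel_trans r z2z.
Qed.

End UnorderedPairPartition.

Lemma eq_upair_partition (X : finType) (T : eqType) (f g : X -> T * T) :
  f =1 g -> upair_partition f = upair_partition g.
Proof.
move=> fg; rewrite /upair_partition /equivalence_partition; apply: eq_imset => x.
by apply/setP => y; rewrite !inE /upair_rel !fg.
Qed.

Lemma Par_upair n k d L Is pis sgs :
  Par n k d L Is pis sgs = upair_partition (pairAB n k d L Is pis sgs).
Proof. by []. Qed.

Lemma upair_same_fst (T : eqType) (u1 u2 v : T * T) : u1.1 = u2.1 ->
  (u1 = v \/ u1 = swap_pair v) -> (u2 = v \/ u2 = swap_pair v) -> u1.2 = u2.2.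
Proof.
case: u1 u2 v => [a1 b1] [a2 b2] [a b] /= E.
by case=> -[E1 E2]; case=> -[E3 E4]; subst.
Qed.

Lemma size_block n h d s (I : seq 'I_n) :
  s < d -> size I = h * d -> size (block n h s I) = h.
Proof.
move=> sd sI; rewrite /block size_takel // size_drop sI.
by rewrite [h * d]mulnC -mulnBl leq_pmull // subn_gt0.
Qed.

Lemma eq_from_blocks n h d (t1 t2 : seq 'I_n) :
  size t1 = h * d -> size t2 = h * d ->
  (forall s, s < d -> block n h s t1 = block n h s t2) -> t1 = t2.
Proof.
case: t1 => [|x0 t1'] s1 s2 blocksE; first by move: s2 blocksE; rewrite -s1; case: t2.
apply: (eq_from_nth (x0 := x0)); first by rewrite s1 s2.
move=> i; rewrite s1 => ih.
have h_gt0 : 0 < h by rewrite lt0n; apply: contraTneq ih => ->.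
have sd : i %/ h < d by rewrite ltn_divLR // mulnC.
have := congr1 (fun t => nth x0 t (i %% h)) (blocksE _ sd).
by rewrite /block !nth_take ?ltn_pmod // !nth_drop -divn_eq.
Qed.

Lemma block_permute n m h s (sg : 'S_m) (I : m.-tuple 'I_n) :
  block n h s (permute n m sg I) = map (tnth I) (block m h s [tuple sg j | j < m]).
Proof. by rewrite /block /permute map_take map_drop /= -map_comp. Qed.

Lemma block_positions_size h d (s : 'I_d) (sg : 'S_(h * d)) :
  size (block (h * d) h s [tuple sg j | j < h * d]) == h.
Proof. by rewrite (size_block (ltn_ord s)) ?size_tuple. Qed.

Definition block_positions h d (sg : 'S_(h * d)) (s : 'I_d) : h.-tuple 'I_(h * d) :=
  Tuple (block_positions_size s sg).

Lemma card_fibres (A B : finType) (S : {set A}) (g : A -> B) :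
  #|S| = \sum_(b : B) #|[set x in S | g x == b]|.
Proof.
rewrite -sum1_card (partition_big g predT) //=.
by apply: eq_bigr => b _; rewrite -sum1_card; apply: eq_bigl => x; rewrite !inE.
Qed.

Lemma card_ffun_pred (I J : finType) (P : I -> pred J) :
  #|[set f : {ffun I -> J} | [forall i, P i (f i)]]| = \prod_i #|P i|.
Proof.
rewrite -(@eq_card _ (family P)) => [|f]; last by rewrite inE; apply/familyP/forallP.
by rewrite card_family foldrE big_map big_enum.
Qed.

(* The number of sigma's producing a given partition Q is bounded by encoding:
   for each class of Q record the block positions used at a representative;
   this code determines every sigma_j(I_{j+1}). *)
Section CountingSigmas.
Variables (n k d L : nat) (x0 : 'I_L * 'I_d).
Variable Is : {ffun 'I_L -> (k./2 * d).-tuple 'I_n}.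

Definition class_rep (C : {set 'I_L * 'I_d}) : 'I_L * 'I_d := odflt x0 [pick x in C].

Lemma class_rep_mem (C : {set 'I_L * 'I_d}) x : x \in C -> class_rep C \in C.
Proof. by rewrite /class_rep; case: pickP => [y //|C0]; rewrite C0. Qed.

Definition sigma_code (Q : {set {set 'I_L * 'I_d}}) (sgs : {ffun 'I_L -> 'S_(k./2 * d)}) :
    {ffun 'I_#|Q| -> (k./2).-tuple 'I_(k./2 * d)} :=
  [ffun i => block_positions (sgs (class_rep (enum_val i)).1) (class_rep (enum_val i)).2].

(* Two families of sigmas with the same partition Q and the same code agree on
   every sigma_j(I_{j+1}): the block B_js is recovered from the (A, B) pair at
   the representative of its class, since A_js = block s of I_j is known. *)
Lemma sigmas_determined Q sgs1 sgs2 :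
  Par n k d L Is (idperms L _) sgs1 = Q -> Par n k d L Is (idperms L _) sgs2 = Q ->
  sigma_code Q sgs1 = sigma_code Q sgs2 ->
  forall j, permute n _ (sgs1 j) (Is (ordS j)) = permute n _ (sgs2 j) (Is (ordS j)).
Proof.
move=> Par1 Par2 codeE j; apply: val_inj.
apply: (eq_from_blocks (h := k./2) (d := d)); rewrite ?size_tuple // => s sd.
set x := (j, Ordinal sd).
set f1 := pairAB n k d L Is (idperms L _) sgs1.
set f2 := pairAB n k d L Is (idperms L _) sgs2.
change ((f1 x).2 = (f2 x).2).
set C := [set y in [set: 'I_L * 'I_d] | upair_rel f1 x y].
have CQ : C \in Q by rewrite -Par1; apply: upair_class_mem.
have xC : x \in C by rewrite !inE upair_rel_refl.
have yC := class_rep_mem xC; set y := class_rep C in yC.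
have rel1 : upair_rel f1 x y by apply: upair_rel_in_class xC yC; rewrite -Par1 in CQ.
have rel2 : upair_rel f2 x y by apply: upair_rel_in_class xC yC; rewrite -Par2 in CQ.
have f12y : f1 y = f2 y.
  have := congr1 (fun c : {ffun 'I_#|Q| -> _} => val (c (enum_rank_in CQ C))) codeE.
  rewrite !ffunE (enum_rankK_in CQ CQ) /= -/y => posE.
  by rewrite /f1 /f2 /pairAB !block_permute posE.
apply: (upair_same_fst (v := f1 y)) => //; first exact/upair_relP.
by rewrite f12y; apply/upair_relP.
Qed.

Definition sigmas_with_partition Q : {set {ffun 'I_L -> 'S_(k./2 * d)}} :=
  [set sgs | Par n k d L Is (idperms L _) sgs == Q].

Lemma card_sigmas_with_code Q c :
  #|[set sgs in sigmas_with_partition Q | sigma_code Q sgs == c]| <=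
  \prod_(j < L) histfact n (Is j).
Proof.
set F := [set _ in _ | _].
have [->|[s0]] := set_0Vmem F; first by rewrite cards0.
rewrite !inE => /andP [/eqP Par0 /eqP code0].
pose same_image j (sg : 'S_(k./2 * d)) :=
  permute n _ sg (Is (ordS j)) == permute n _ (s0 j) (Is (ordS j)).
apply: (@leq_trans #|[set sgs : {ffun 'I_L -> 'S_(k./2 * d)} |
                      [forall j, same_image j (sgs j)]]|).
  apply/subset_leq_card/subsetP => sgs; rewrite !inE => /andP [/eqP Par1 /eqP code1].
  apply/forallP => j; apply/eqP; apply: (sigmas_determined Par1 Par0 _ j).
  by rewrite code1 code0.
rewrite card_ffun_pred [X in _ <= X](reindex_inj (@ordS_inj _)) /=.
apply: leq_prod => j _.
apply: leq_trans (card_permute_fibre (Is (ordS j)) (permute n _ (s0 j) (Is (ordS j)))).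
by apply/subset_leq_card/subsetP => sg; rewrite !inE.
Qed.

Lemma card_sigmas_with_partition Q :
  #|sigmas_with_partition Q| <=
  ((k./2 * d) ^ k./2) ^ #|Q| * \prod_(j < L) histfact n (Is j).
Proof.
rewrite (card_fibres _ (sigma_code Q)).
apply: (@leq_trans (\sum_(c : {ffun 'I_#|Q| -> (k./2).-tuple 'I_(k./2 * d)})
                      \prod_(j < L) histfact n (Is j))).
  by apply: leq_sum => c _; apply: card_sigmas_with_code.
by rewrite sum_nat_const card_ffun card_tuple !card_ord.
Qed.

End CountingSigmas.

Local Open Scope ring_scope.

(* Moments of the random tensor.  An entry T_t takes the value 0 (prob 1-p)
   or +-1 (prob p/2 each), independently over t, so E[T_t^e] is 1 for e = 0,
   0 for e odd and p for e even positive. *)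
Section RandomTensor.
Variables (R : realFieldType) (n k : nat) (p : R).

Definition entry_value (included sign : bool) : R :=
  if included then (if sign then 1 else -1) else 0.

Definition entry (w : outcome n k) (t : k.-tuple 'I_n) : R := entry_value (w.1 t) (w.2 t).

Definition moment (e : nat) : R := if e == 0%N then 1 else if odd e then 0 else p.

Lemma expect_ext (X Y : outcome n k -> R) : (forall w, X w = Y w) ->
  expect R n k p X = expect R n k p Y.
Proof. by move=> XY; apply: eq_bigr => w _; rewrite XY. Qed.

Lemma expect_sum (I : finType) (F : I -> outcome n k -> R) :
  expect R n k p (fun w => \sum_i F i w) = \sum_i expect R n k p (F i).
Proof. by rewrite /expect exchange_big /=; apply: eq_bigr => w _; rewrite mulr_sumr. Qed.

Lemma expect_scale a (X : outcome n k -> R) :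
  expect R n k p (fun w => a * X w) = a * expect R n k p X.
Proof. by rewrite /expect mulr_sumr; apply: eq_bigr => w _; rewrite mulrCA. Qed.

Lemma expect_prod_entries (G : k.-tuple 'I_n -> bool -> bool -> R) :
  expect R n k p (fun w => \prod_t G t (w.1 t) (w.2 t)) =
  \prod_t \sum_b1 \sum_b2 ((if b1 then p else 1 - p) * 2^-1 * G t b1 b2).
Proof.
rewrite /expect /prob_outcome.
transitivity (\sum_(w1 : {ffun k.-tuple 'I_n -> bool}) \sum_(w2 : {ffun k.-tuple 'I_n -> bool})
   \prod_t ((if w1 t then p else 1 - p) * 2^-1 * G t (w1 t) (w2 t))).
  by rewrite pair_big /=; apply: eq_bigr => -[w1 w2] _ /=; rewrite -big_split.
symmetry; rewrite bigA_distr_bigA /=; apply: eq_bigr => w1 _.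
by rewrite bigA_distr_bigA.
Qed.

Lemma expect_entry_power e :
  \sum_b1 \sum_b2 ((if b1 then p else 1 - p) * 2^-1 * entry_value b1 b2 ^+ e) = moment e.
Proof.
rewrite !big_bool /= /moment /entry_value.
case: e => [|e]; rewrite ?expr0 ?expr0n /=; first by rewrite !mulr1 -!mulrDl; field.
rewrite expr1n -signr_odd /=; case: (odd e) => /=; rewrite ?expr0 ?expr1 !mulr0.
all: by field.
Qed.

Lemma expect_monomial (X : finType) (tt : X -> k.-tuple 'I_n) :
  expect R n k p (fun w => \prod_x entry w (tt x)) =
  \prod_t moment #|[set x | tt x == t]|.
Proof.
transitivity (expect R n k p (fun w =>
    \prod_t entry_value (w.1 t) (w.2 t) ^+ #|[set x | tt x == t]|)).
  apply: expect_ext => w; rewrite (partition_big tt predT) //=.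
  apply: eq_bigr => t _; rewrite -prodr_const.
  by apply: eq_big => [x|x /eqP <-]; rewrite ?inE.
rewrite (expect_prod_entries (fun t b1 b2 => entry_value b1 b2 ^+ #|[set x | tt x == t]|)).
apply: eq_bigr => t _; exact: expect_entry_power.
Qed.

Lemma prod_moment_le (mult : k.-tuple 'I_n -> nat) : 0 <= p <= 1 ->
  \prod_t moment (mult t) <= p ^+ #|[set t | mult t != 0%N]|.
Proof.
case/andP=> p0 p1.
rewrite (bigID (fun t => mult t == 0%N)) /= big1 => [|t /eqP->]; last by rewrite /moment.
rewrite mul1r -prodr_const.
have -> : \prod_(t in [set t | mult t != 0%N]) p = \prod_(t | mult t != 0%N) p.
  by apply: eq_bigl => t; rewrite inE.
apply: ler_prod => t /negbTE mult_t; rewrite /moment mult_t.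
by case: ifP => _; rewrite ?p0 ?lexx.
Qed.

Lemma prod_moment_odd (mult : k.-tuple 'I_n -> nat) t : odd (mult t) ->
  \prod_t moment (mult t) = 0.
Proof.
move=> odd_t; rewrite (bigD1 t) //= /moment odd_t.
by case: eqP odd_t => [->|_] //; rewrite mul0r.
Qed.

(* Since
   S^Phi_{A,B} = (T_(A,B) + T_(B,A))/2, it expands as an average over the
   choices c : X -> bool of the monomials prod_x T_(chosen ordering of f x).
   In each monomial, the tuples hit by the points of one class of the
   unordered-pair partition are only (A,B) and (B,A) of that class, so an odd
   class forces an odd multiplicity, and distinct classes hit distinct tuples. *)
Section PairProduct.
Variables (X : finType) (f : X -> seq 'I_n * seq 'I_n) (h : nat) (t0 : k.-tuple 'I_n).
Hypothesis hk : (h + h)%N = k.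
Hypothesis size_f : forall x, size (f x).1 = h /\ size (f x).2 = h.

Definition tuple_AB x : k.-tuple 'I_n := insubd t0 ((f x).1 ++ (f x).2).
Definition tuple_BA x : k.-tuple 'I_n := insubd t0 ((f x).2 ++ (f x).1).
Definition chosen_tuple (c : {ffun X -> bool}) x := if c x then tuple_AB x else tuple_BA x.

Lemma eq_insubd_cat (a b a' b' : seq 'I_n) :
  size a = h -> size b = h -> size a' = h -> size b' = h ->
  (insubd t0 (a ++ b) == insubd t0 (a' ++ b')) = (a == a') && (b == b').
Proof.
move=> sa sb sa' sb'; rewrite -val_eqE !insubdK ?eqseq_cat ?sa ?sa' //;
  by rewrite -topredE /= size_cat ?sa ?sb ?sa' ?sb' hk.
Qed.

Lemma upair_rel_chosen c x0 x :
  upair_rel f x0 x = (chosen_tuple c x == tuple_AB x0) || (chosen_tuple c x == tuple_BA x0).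
Proof.
have [sa sb] := size_f x; have [sa0 sb0] := size_f x0.
rewrite /upair_rel /chosen_tuple /tuple_AB /tuple_BA /swap_pair.
move: sa sb sa0 sb0; case: (f x) (f x0) => [a b] [a0 b0] /= sa sb sa0 sb0.
rewrite !xpair_eqE !(eq_sym a0) !(eq_sym b0).
by case: (c x); rewrite !eq_insubd_cat // [(b == a0) && _]andbC // orbC [(b == b0) && _]andbC.
Qed.

Lemma odd_class_odd_multiplicity c C : C \in upair_partition f -> odd #|C| ->
  exists t, odd #|[set x | chosen_tuple c x == t]|.
Proof.
move=> /imsetP [x0 _ ->] odd_C.
have classE : #|[set y in [set: X] | upair_rel f x0 y]| =
         #|[set y | (chosen_tuple c y == tuple_AB x0) || (chosen_tuple c y == tuple_BA x0)]|.
  by apply: eq_card => y; rewrite !inE (upair_rel_chosen c).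
rewrite classE in odd_C.
have [ABBA | AB_BA] := eqVneq (tuple_AB x0) (tuple_BA x0).
  exists (tuple_AB x0); move: odd_C; congr (odd _); apply: eq_card => y.
  by rewrite !inE ABBA orbb.
rewrite (_ : [set y | _] = [set y | chosen_tuple c y == tuple_AB x0] :|:
                            [set y | chosen_tuple c y == tuple_BA x0]) in odd_C; last first.
  by apply/setP => y; rewrite !inE.
rewrite cardsU (_ : _ :&: _ = set0) ?cards0 ?subn0 ?oddD in odd_C; last first.
  by apply/setP => y; rewrite !inE; case: eqP => // ->; rewrite (negbTE AB_BA).
case odd_AB : (odd #|[set y | chosen_tuple c y == tuple_AB x0]|); first by exists (tuple_AB x0).
by exists (tuple_BA x0); rewrite odd_AB in odd_C.
Qed.

(* Mapping each class to the tuple chosen at one of its points is injective. *)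
Lemma card_classes_le_support c :
  (#|upair_partition f| <= #|[set t | #|[set x | chosen_tuple c x == t]| != 0%N]|)%N.
Proof.
pose g (C : {set X}) := odflt t0 (omap (chosen_tuple c) [pick y in C]).
have gP C : C \in upair_partition f -> exists2 y, y \in C & g C = chosen_tuple c y.
  move=> /imsetP [x0 _ ->]; rewrite /g; case: pickP => [y yC|C0] /=; first by exists y.
  by have := C0 x0; rewrite !inE upair_rel_refl.
have g_inj : {in upair_partition f &, injective g}.
  move=> C1 C2 C1P C2P; have [y1 y1C ->] := gP _ C1P; have [y2 y2C ->] := gP _ C2P.
  move=> same_tuple; apply: upair_class_eq C1P C2P y1C y2C _.
  by rewrite (upair_rel_chosen c) -same_tuple /chosen_tuple; case: (c y1); rewrite eqxx ?orbT.
rewrite -(card_in_imset g_inj); apply/subset_leq_card/subsetP => _ /imsetP [C CP ->].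
have [y yC ->] := gP _ CP; rewrite inE -lt0n; apply/card_gt0P; exists y; by rewrite inE.
Qed.

End PairProduct.

Definition parity_weight (X : finType) (Q : {set {set X}}) : R :=
  if [forall C in Q, ~~ odd #|C|] then p ^+ #|Q| else 0.

(* On sequences of length k the tensor T is the entry of the corresponding
   tuple (t0 is only a default value). *)
Lemma tensorT_entry (t0 : k.-tuple 'I_n) w (s : seq 'I_n) : size s == k ->
  tensorT R n k w s = entry w (insubd t0 s).
Proof.
by move=> size_s; rewrite /tensorT /insubd /entry /entry_value; case: insubP => //=; rewrite size_s.
Qed.

Section PairProductExpectation.
Variables (X : finType) (f : X -> seq 'I_n * seq 'I_n) (h : nat) (t0 : k.-tuple 'I_n).
Hypothesis hk : (h + h)%N = k.
Hypothesis size_f : forall x, size (f x).1 = h /\ size (f x).2 = h.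

Lemma Sphi_product_expansion w :
  \prod_x Sphi R n k w (f x).1 (f x).2 =
  \sum_(c : {ffun X -> bool}) (2^-1 ^+ #|X| * \prod_x entry w (chosen_tuple f t0 c x)).
Proof.
have size_cat a b : size a = h -> size b = h -> size (a ++ b) == k.
  by move=> sa sb; rewrite size_cat sa sb hk.
have Sphi_avg x : Sphi R n k w (f x).1 (f x).2 =
    \sum_(b : bool) (2^-1 * entry w (if b then tuple_AB f t0 x else tuple_BA f t0 x)).
  have [sa sb] := size_f x.
  rewrite big_bool /Sphi /Mphi /= !(tensorT_entry t0 w) ?size_cat //.
  by rewrite mulrDl !(mulrC _ 2^-1).
under eq_bigr => x _ do rewrite Sphi_avg.
rewrite bigA_distr_bigA; apply: eq_bigr => c _.
by rewrite big_split prodr_const /chosen_tuple.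
Qed.

(* Each monomial vanishes in expectation if some class is odd (an odd
   multiplicity), and is at most p^(#support) <= p^(#classes) otherwise. *)
Lemma expect_chosen_monomial_le c : 0 <= p <= 1 ->
  expect R n k p (fun w => \prod_x entry w (chosen_tuple f t0 c x)) <=
  parity_weight (upair_partition f).
Proof.
move=> p01; rewrite expect_monomial /parity_weight.
case: ifP => [_ | /negbT /forallPn [C]].
  apply: le_trans (prod_moment_le _ p01) _.
  case/andP: p01 => p0 p1; apply: ler_wiXn2l => //.
  exact: (card_classes_le_support t0 hk size_f c).
rewrite negb_imply negbK => /andP [CQ odd_C].
have [t odd_t] := odd_class_odd_multiplicity t0 hk size_f c CQ odd_C.
by rewrite (prod_moment_odd odd_t).
Qed.

Lemma expect_Sphi_product_le : 0 <= p <= 1 ->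
  expect R n k p (fun w => \prod_x Sphi R n k w (f x).1 (f x).2) <=
  parity_weight (upair_partition f).
Proof.
move=> p01; rewrite (expect_ext Sphi_product_expansion) expect_sum.
under eq_bigr => c _ do rewrite expect_scale.
apply: le_trans (ler_sum _ (fun c _ => ler_wpM2l _ (expect_chosen_monomial_le c p01))) _.
  by rewrite exprn_ge0 // invr_ge0.
rewrite sumr_const card_ffun card_bool -mulrnAl -mulr_natr natrX -exprMn.
by rewrite mulVf ?pnatr_eq0 // expr1n mul1r.
Qed.

End PairProductExpectation.

End RandomTensor.

Section ClosedWalks.
Variable R : comPzRingType.

Lemma sum_tuple_cons (T : finType) L (F : L.+1.-tuple T -> R) :
  \sum_t F t = \sum_x \sum_(t : L.-tuple T) F [tuple of x :: t].
Proof.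
rewrite pair_big /= (reindex (fun u : T * L.-tuple T => [tuple of u.1 :: u.2])) //=.
exists (fun t : L.+1.-tuple T => (thead t, [tuple of behead t])).
  by move=> [x t] _; congr pair; apply: val_inj.
by move=> t _; rewrite [RHS]tuple_eta.
Qed.

Lemma pow_walks N (M : 'M[R]_N) L a b :
  (M ^+ L.+1) a b = \sum_(t : L.-tuple 'I_N)
     \prod_(j < L.+1) M (nth b (a :: t) j) (nth b (a :: t) j.+1).
Proof.
elim: L a b => [|L IH] a b.
  rewrite expr1 (big_pred1 [tuple]) => [|t]; last by rewrite [t]tuple0 /= eqxx.
  by rewrite big_ord1.
rewrite exprS -mulmxE mxE (sum_tuple_cons (fun t : L.+1.-tuple 'I_N =>
  \prod_(j < L.+2) M (nth b (a :: t) j) (nth b (a :: t) j.+1))).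
apply: eq_bigr => x _; rewrite IH mulr_sumr; apply: eq_bigr => t _.
by rewrite [RHS]big_ord_recl.
Qed.

Lemma trace_pow_closed_walks N (M : 'M[R]_N) L : (0 < L)%N ->
  \tr (M ^+ L) = \sum_(f : {ffun 'I_L -> 'I_N}) \prod_(j < L) M (f j) (f (ordS j)).
Proof.
case: L => // L _; rewrite /mxtrace.
under eq_bigr => a _ do rewrite pow_walks.
rewrite pair_big /=.
pose g (f : {ffun 'I_L.+1 -> 'I_N}) := (f ord0, [tuple f (lift ord0 j) | j < L]).
have gnth f (i : 'I_L.+1) : nth (g f).1 ((g f).1 :: (g f).2) i = f i.
  case: i => [[|i] iL] /=; first by congr (f _); apply: val_inj.
  have i_lt_L : (i < L)%N := iL.
  rewrite (nth_map (Ordinal i_lt_L)) ?size_enum_ord //.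
  by congr (f _); apply: val_inj; rewrite /= nth_enum_ord.
rewrite (reindex g) /=; last first.
  exists (fun u : 'I_N * L.-tuple 'I_N => [ffun i : 'I_L.+1 => nth u.1 (u.1 :: u.2) i]).
    by move=> f _; apply/ffunP => i; rewrite ffunE gnth.
  move=> [a t] _; rewrite /g /= ffunE /=; congr pair.
  by apply: eq_from_tnth => j; rewrite tnth_mktuple ffunE /= (tnth_nth a).
apply: eq_bigr => f _; apply: eq_bigr => j _; rewrite gnth; congr (M _ _).
have [jL | Lj] := ltnP j L.
  have -> : ordS j = lift ord0 (Ordinal jL) by apply: val_inj; rewrite /= modn_small.
  by rewrite -(gnth f (lift ord0 (Ordinal jL))).
have -> : j = ord_max by apply: val_inj; apply/eqP; rewrite eqn_leq Lj -ltnS ltn_ord.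
rewrite /= nth_default /=; last by rewrite size_map size_enum_ord.
by congr (f _); apply: val_inj; rewrite /= modnn.
Qed.

End ClosedWalks.

Lemma trace_Rmat_pow (R : numFieldType) n k d L (w : outcome n k) : (0 < L)%N ->
  \tr (Rmat R n k d w ^+ L) =
  ((((k./2 * d)`!)%:R ^+ 2)^-1) ^+ L *
  \sum_(Is : {ffun 'I_L -> (k./2 * d).-tuple 'I_n})
    \sum_(pis : {ffun 'I_L -> 'S_(k./2 * d)}) \sum_(sgs : {ffun 'I_L -> 'S_(k./2 * d)})
      \prod_(x : 'I_L * 'I_d)
        Sphi R n k w (pairAB n k d L Is pis sgs x).1 (pairAB n k d L Is pis sgs x).2.
Proof.
move=> L_gt0; rewrite trace_pow_closed_walks // mulr_sumr.
rewrite (reindex (fun Is : {ffun 'I_L -> (k./2 * d).-tuple 'I_n} =>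
                    [ffun j => enum_rank (Is j)])) /=; last first.
  exists (fun f : {ffun 'I_L -> 'I_#|{: (k./2 * d).-tuple 'I_n}|} =>
            [ffun j => enum_val (f j)]) => g _; apply/ffunP => j;
    by rewrite !ffunE ?enum_rankK ?enum_valK.
apply: eq_bigr => Is _.
under eq_bigr => j _ do rewrite /Rmat mxE !ffunE !enum_rankK /RphiD.
rewrite big_split /= prodr_const card_ord; congr (_ * _).
rewrite bigA_distr_bigA; apply: eq_bigr => pis _.
rewrite bigA_distr_bigA; apply: eq_bigr => sgs _.
by rewrite /SphiD pair_big /=; apply: eq_bigr => -[j s] _.
Qed.

Lemma permute1 n m (I : m.-tuple 'I_n) : permute n m 1%g I = I.
Proof. by apply: eq_from_tnth => i; rewrite tnth_mktuple perm1. Qed.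

Lemma Par_relabel n k d L Is pis sgs :
  Par n k d L Is pis sgs =
  Par n k d L [ffun j => permute n _ (pis j) (Is j)] (idperms L _)
              [ffun j => (sgs j * (pis (ordS j))^-1)%g].
Proof.
rewrite !Par_upair; apply: eq_upair_partition => x.
rewrite /pairAB /idperms !ffunE permute1; congr (_, block _ _ _ _).
by apply/(congr1 val)/eq_from_tnth => i; rewrite !tnth_mktuple permM permKV.
Qed.

Lemma sum_over_pis (R : pzSemiRingType) n k d L (F : {set {set 'I_L * 'I_d}} -> R) :
  \sum_(Is : {ffun 'I_L -> (k./2 * d).-tuple 'I_n})
    \sum_(pis : {ffun 'I_L -> 'S_(k./2 * d)}) \sum_(sgs : {ffun 'I_L -> 'S_(k./2 * d)})
      F (Par n k d L Is pis sgs) =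
  (k./2 * d)`!%:R ^+ L *
  \sum_(Is : {ffun 'I_L -> (k./2 * d).-tuple 'I_n}) \sum_(sgs : {ffun 'I_L -> 'S_(k./2 * d)})
      F (Par n k d L Is (idperms L _) sgs).
Proof.
rewrite exchange_big /=.
transitivity (\sum_(pis : {ffun 'I_L -> 'S_(k./2 * d)})
  \sum_(Is : {ffun 'I_L -> (k./2 * d).-tuple 'I_n}) \sum_(sgs : {ffun 'I_L -> 'S_(k./2 * d)})
      F (Par n k d L Is (idperms L _) sgs)); last first.
  by rewrite sumr_const card_ffun card_Sn card_ord -[LHS]mulr_natl natrX.
apply: eq_bigr => pis _.
under eq_bigr => Is _ do under eq_bigr => sgs _ do rewrite Par_relabel.
have relabel_inj : injective (fun Is : {ffun 'I_L -> (k./2 * d).-tuple 'I_n} =>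
                                [ffun j => permute n _ (pis j) (Is j)]).
  move=> I1 I2 /ffunP I12; apply/ffunP => j; apply: eq_from_tnth => i.
  have := congr1 (fun t => tnth t ((pis j)^-1 i)%g) (I12 j).
  by rewrite !ffunE !tnth_mktuple permKV.
have shift_inj : injective (fun sgs : {ffun 'I_L -> 'S_(k./2 * d)} =>
                              [ffun j => (sgs j * (pis (ordS j))^-1)%g]).
  by move=> s1 s2 /ffunP s12; apply/ffunP => j; have := s12 j; rewrite !ffunE => /mulIg.
rewrite [RHS](reindex_inj relabel_inj) /=; apply: eq_bigr => Is _.
by rewrite [RHS](reindex_inj shift_inj).
Qed.

Lemma expect_walks_le (R : realFieldType) n k d L (p : R) :
  ~~ odd k -> (0 < n)%N -> 0 <= p <= 1 ->
  expect R n k p (fun w =>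
    \sum_(Is : {ffun 'I_L -> (k./2 * d).-tuple 'I_n})
      \sum_(pis : {ffun 'I_L -> 'S_(k./2 * d)}) \sum_(sgs : {ffun 'I_L -> 'S_(k./2 * d)})
        \prod_(x : 'I_L * 'I_d)
          Sphi R n k w (pairAB n k d L Is pis sgs x).1 (pairAB n k d L Is pis sgs x).2) <=
  \sum_(Is : {ffun 'I_L -> (k./2 * d).-tuple 'I_n})
    \sum_(pis : {ffun 'I_L -> 'S_(k./2 * d)}) \sum_(sgs : {ffun 'I_L -> 'S_(k./2 * d)})
      parity_weight p (Par n k d L Is pis sgs).
Proof.
move=> k_even n_gt0 p01.
have hk : (k./2 + k./2)%N = k by rewrite addnn -[RHS](odd_double_half k) (negbTE k_even).
rewrite expect_sum; apply: ler_sum => Is _.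
rewrite expect_sum; apply: ler_sum => pis _.
rewrite expect_sum; apply: ler_sum => sgs _.
rewrite Par_upair (expect_Sphi_product_le (h := k./2) [tuple Ordinal n_gt0 | _ < k]) //.
by move=> x; split; apply: (size_block (ltn_ord _)); exact: size_tuple.
Qed.

Lemma weight_sigmas_with_partition_le (R : realFieldType) n k d L (p : R)
    (x0 : 'I_L * 'I_d) Is Q : 0 <= p ->
  \sum_(sgs | Par n k d L Is (idperms L _) sgs == Q) parity_weight p Q <=
  (if even_partition L d Q && Qvalid n k d L Q Is
   then (p * (k./2 * d)%:R ^+ k./2) ^+ #|Q| * \prod_(j < L) (histfact n (Is j))%:R
   else 0).
Proof.
move=> p0; rewrite (_ : \sum_(sgs | _) _ = parity_weight p Q *+ #|sigmas_with_partition Is Q|);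
  last by rewrite -sumr_const; apply: eq_bigl => sgs; rewrite inE.
have [->|[s0]] := set_0Vmem (sigmas_with_partition Is Q).
  rewrite cards0 mulr0n; case: ifP => // _.
  by rewrite mulr_ge0 ?prodr_ge0 // exprn_ge0 // mulr_ge0 // exprn_ge0.
rewrite inE => /eqP s0Q.
have partQ : partition Q [set: 'I_L * 'I_d] by rewrite -s0Q; exact: upair_partitionP.
have validQ : Qvalid n k d L Q Is by apply/existsP; exists s0; rewrite s0Q.
rewrite /parity_weight /even_partition partQ validQ /=.
case: ifP => _; last by rewrite mul0rn.
rewrite exprMn -mulrA -[_ *+ _]mulr_natr ler_wpM2l ?exprn_ge0 //.
rewrite -natr_prod -!natrX -natrM ler_nat.
exact: card_sigmas_with_partition x0 Is Q.
Qed.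

(* Summing the previous bound over Q and {I_j}, after grouping the sigmas by
   the partition they produce; x0 is any point, used for class representatives. *)
Lemma sum_parity_weight_le (R : realFieldType) n k d L (p : R) (x0 : 'I_L * 'I_d) :
  0 <= p ->
  \sum_(Is : {ffun 'I_L -> (k./2 * d).-tuple 'I_n}) \sum_(sgs : {ffun 'I_L -> 'S_(k./2 * d)})
      parity_weight p (Par n k d L Is (idperms L _) sgs) <=
  \sum_(Q : {set {set 'I_L * 'I_d}} | even_partition L d Q)
     ((p * (k./2 * d)%:R ^+ k./2) ^+ #|Q| *
      \sum_(Is : {ffun 'I_L -> (k./2 * d).-tuple 'I_n} | Qvalid n k d L Q Is)
        \prod_(j < L) (histfact n (Is j))%:R).
Proof.
move=> p0.
apply: le_trans (_ : _ <= \sum_Is \sum_(Q : {set {set 'I_L * 'I_d}})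
    (if even_partition L d Q && Qvalid n k d L Q Is
     then (p * (k./2 * d)%:R ^+ k./2) ^+ #|Q| * \prod_(j < L) (histfact n (Is j))%:R
     else 0)) _.
  apply: ler_sum => Is _.
  rewrite (partition_big (fun sgs => Par n k d L Is (idperms L _) sgs) predT) //=.
  apply: ler_sum => Q _; apply: le_trans (weight_sigmas_with_partition_le x0 Is Q p0).
  by rewrite le_eqVlt (eq_bigr (fun=> parity_weight p Q)) ?eqxx // => sgs /eqP ->.
rewrite exchange_big /= [X in _ <= X]big_mkcond /=; apply: ler_sum => Q _.
case: ifP => _; last by rewrite big1.
by rewrite mulr_sumr [X in _ <= X]big_mkcond; apply: ler_sum => Is _; case: ifP.
Qed.

Theorem mainTheorem4 (R : realFieldType) (n k d l : nat) (p : R) :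
  ~~ odd k -> (0 < d)%N -> (0 < l)%N -> (0 < n)%N -> 0 <= p <= 1 ->
  expect R n k p (fun w : outcome n k => \tr (Rmat R n k d w ^+ (2 * l)))
  <= (((k./2 * d)`!)%:R ^+ (2 * l))^-1 *
     \sum_(Q : {set {set 'I_(2 * l) * 'I_d}} | even_partition (2 * l) d Q)
        ((p * ((k./2 * d)%:R) ^+ k./2) ^+ #|Q| *
         \sum_(Is : {ffun 'I_(2 * l) -> (k./2 * d).-tuple 'I_n} | Qvalid n k d (2 * l) Q Is)
            \prod_(j < 2 * l) (histfact n (Is j))%:R).
Proof.
move=> k_even d_gt0 l_gt0 n_gt0 p01.
have p0 : 0 <= p by case/andP: p01.
have L_gt0 : (0 < 2 * l)%N by rewrite muln_gt0.
pose x0 : 'I_(2 * l) * 'I_d := (Ordinal L_gt0, Ordinal d_gt0).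
pose fact_kd : R := ((k./2 * d)`!)%:R.
have fact_kd_neq0 : fact_kd != 0 by rewrite pnatr_eq0 -lt0n fact_gt0.
rewrite (expect_ext p (fun w => trace_Rmat_pow R d w L_gt0)) expect_scale.
apply: le_trans (ler_wpM2l _ (expect_walks_le d (2 * l) k_even n_gt0 p01)) _.
  by rewrite exprn_ge0 // invr_ge0 exprn_ge0 // ler0n.
rewrite sum_over_pis mulrA -exprMn.
have -> : (fact_kd ^+ 2)^-1 * fact_kd = fact_kd^-1.
  by rewrite expr2 invfM -mulrA mulVf ?mulr1.
rewrite exprVn; apply: ler_wpM2l; last exact: sum_parity_weight_le x0 p0.
by rewrite invr_ge0 exprn_ge0 // ler0n.
Qed.
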